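(* For every $q\in(0,1)$ there exists an $S$-gap shift which has the specification property and has entropy $q$.
   Context: For a nonempty set $S\subseteq\{0,1,2,\dots\}$, the $S$-gap shift $X(S)\subseteq\{0,1\}^{\mathbb{Z}}$ is the set of bi-infinite binary sequences in which the number of consecutive zeros between ones is always an element of $S$. The entropy of a shift $X$ is $h(X)=\lim_n\frac1n\log|\mathcal{B}_n(X)|$, where $\mathcal{B}_n(X)$ is the set of words of length $n$ occurring in points of $X$ and $\log$ is to base $2$. $X$ has the specification property if there is $N\ge1$ such that for all $u,v\in\mathcal{B}(X)=\bigcup_n\mathcal{B}_n(X)$ there exists $w\in\mathcal{B}_N(X)$ with $uwv\in\mathcal{B}(X)$. *)

From HB Require Import structures.
From mathcomp Require Import all_boot all_order all_algebra.
From mathcomp Require Import boolp classical_sets reals topology normedtype sequences exp.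
Set Implicit Arguments. Unset Strict Implicit. Unset Printing Implicit Defensive.
Import Order.TTheory GRing.Theory Num.Theory.
Import numFieldNormedType.Exports.
Local Open Scope ring_scope.
Local Open Scope classical_set_scope.

Definition point := int -> bool.

Definition gap_shift (S : set nat) : set point :=
  fun x => forall i j : int, i < j -> x i -> x j ->
    (forall k : int, i < k < j -> ~~ x k) -> S (absz (j - i - 1)%R).

Definition occurs (w : seq bool) (x : point) : Prop :=
  exists i : int, forall k : nat, (k < size w)%N -> x (i + k%:Z) = nth false w k.

Definition in_lang (X : set point) (w : seq bool) : Prop :=
  exists x, X x /\ occurs w x.

Definition blocks (X : set point) (n : nat) : {set n.-tuple bool} :=
  [set w : n.-tuple bool | `[< in_lang X (tval w) >]].

Definition has_entropy (R : realType) (X : set point) (h : R) : Prop :=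
  (fun n : nat => ln (#|blocks X n|%:R : R) / ln 2 / n%:R) @ \oo --> h.

Definition specification (X : set point) : Prop :=
  exists N : nat, (1 <= N)%N /\
    forall u v, in_lang X u -> in_lang X v ->
      exists w, size w = N /\ in_lang X w /\ in_lang X (u ++ w ++ v).

From HB Require Import structures.
From mathcomp Require Import all_boot all_order all_algebra.
From mathcomp Require Import boolp classical_sets reals topology normedtype sequences exp.
From mathcomp Require Import zify ring lra.
Import Order.TTheory GRing.Theory Num.Theory.
Import numFieldNormedType.Exports.

(* Put r = 2^(-q), so 1/2 < r < 1.  The words of length n of X(S) are counted through a renewal
   equation whose characteristic equation is sum_(s in S) x^(s+1) = 1; hence if this sum equals 1 at
   x = r, the counts grow like r^(-n) up to subexponential factors and h(X(S)) = -log2 r = q.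
   Such an S is produced by the lazy expansion of 1 in the powers r^(s+1), started with two
   consecutive elements j and j+1; since r > 1/2 the expansion never skips more than boundedly many
   terms.  Specification then follows: bounded gaps let any two words be joined through an element
   of S, and the blocks 0^j 1 and 0^(j+1) 1 fill any sufficiently long stretch between them. *)

Set Implicit Arguments.
Unset Strict Implicit.
Unset Printing Implicit Defensive.

Local Open Scope classical_set_scope.

Section GapAutomaton.
Variable S : pred nat.

(* State [Some t]: the last one read was followed by [t] zeros; [None]: no one read yet. *)
Fixpoint gap_ok (st : option nat) (w : seq bool) : bool :=
  match w with
  | [::] => true
  | false :: w' => gap_ok (omap succn st) w'
  | true :: w' => (if st is Some t then S t else true) && gap_ok (Some 0) w'
  end.

Fixpoint gap_state (st : option nat) (w : seq bool) : option nat :=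
  match w with
  | [::] => st
  | false :: w' => gap_state (omap succn st) w'
  | true :: w' => gap_state (Some 0) w'
  end.

Lemma gap_ok_cat st u v : gap_ok st (u ++ v) = gap_ok st u && gap_ok (gap_state st u) v.
Proof. by elim: u st => [|[] u IH] st //=; rewrite IH andbA. Qed.

Lemma gap_state_cat st u v : gap_state st (u ++ v) = gap_state (gap_state st u) v.
Proof. by elim: u st => [|[] u IH] st //=. Qed.

Lemma gap_ok_nseq st m : gap_ok st (nseq m false).
Proof. by elim: m st => [|m IH] st //=. Qed.

Lemma gap_state_nseq t m : gap_state (Some t) (nseq m false) = Some (m + t).
Proof. by elim: m t => [|m IH] t //=; rewrite IH addnS. Qed.

Lemma gap_state_nseq_None m : gap_state None (nseq m false) = None.
Proof. by elim: m => [|m IH]. Qed.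

Lemma gap_ok_None t w : gap_ok (Some t) w -> gap_ok None w.
Proof. by elim: w t => [|[] w IH] t //= => [/andP[]|/IH]. Qed.

Lemma gap_ok_gaps w st : gap_ok st w ->
  (forall b t, b < size w -> nth false w b -> (forall c, c < b -> ~~ nth false w c) ->
     st = Some t -> S (t + b))
  /\ (forall a b, a < b < size w -> nth false w a -> nth false w b ->
     (forall c, a < c < b -> ~~ nth false w c) -> S (b - a - 1)).
Proof.
elim: w st => [|e w IH] st /=.
  by split=> [b t|a b]; rewrite ?ltn0 ?andbF.
have step : gap_ok st (e :: w) -> gap_ok (if e then Some 0 else omap succn st) w.
  by case: e => //= /andP[].
move=> ok; have [IHfirst IHgap] := IH _ (step ok); split.
- case=> [|b] t //= hb wb zeros hst.
    by move: ok; rewrite wb hst /= addn0 => /andP[].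
  have e0 : e = false by apply/negbTE/(zeros 0).
  rewrite addnS -addSn; apply: (IHfirst b) => // [c hc|]; first exact: (zeros c.+1).
  by rewrite e0 hst.
- case=> [|a] [|b] //= hab wa wb zeros.
    rewrite subn0 subn1 -[b]add0n; apply: (IHfirst b) => // [c hc|].
      exact: (zeros c.+1).
    by rewrite wa.
  rewrite subSS; apply: IHgap => // c /andP[ac cb].
  by apply: (zeros c.+1); rewrite !ltnS ac cb.
Qed.

Definition window_state (x : int -> bool) (i : int) (st : option nat) : Prop :=
  if st is Some t then x (i - t.+1%:Z)%R /\ forall m, m < t -> ~~ x (i - m.+1%:Z)%R
  else True.

Lemma gap_ok_window x : gap_shift [set u | S u] x ->
  forall w i st, (forall k, k < size w -> x (i + k%:Z)%R = nth false w k) ->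
  window_state x i st -> gap_ok st w.
Proof.
move=> hx; elim=> [|e w IH] i st //= hw hst.
have xi : x i = e by move: (hw 0 isT); rewrite addr0.
have hw' k : k < size w -> x (i + 1 + k%:Z)%R = nth false w k.
  by move=> hk; have /= <- := hw k.+1 hk; congr x; lia.
case: e xi hw => xi _; last first.
  apply: IH hw' _; case: st hst => [t [xt zeros]|] //=; split.
    by rewrite (_ : (i + 1 - t.+2%:Z = i - t.+1%:Z)%R) //; lia.
  case=> [|m] hm; first by rewrite (_ : (i + 1 - 1 = i)%R) ?xi //; lia.
  by rewrite (_ : (i + 1 - m.+2%:Z = i - m.+1%:Z)%R) ?zeros //; lia.
apply/andP; split; last by apply: IH hw' _; rewrite /= addrK.
case: st hst => [t [xt zeros]|] //.
have := hx (i - t.+1%:Z)%R i _ xt xi.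
rewrite (_ : absz (i - (i - t.+1%:Z) - 1)%R = t); last by lia.
apply; first by lia.
move=> k /andP[k1 k2].
rewrite (_ : k = (i - (absz (i - k)%R).-1.+1%:Z)%R); last by lia.
by apply: zeros; lia.
Qed.

Definition zero_pad (w : seq bool) : int -> bool := fun i =>
  [&& (0 <= i)%R, (i < (size w)%:Z)%R & nth false w (absz i)].

Lemma zero_pad_in_gap_shift w : gap_ok None w -> gap_shift [set u | S u] (zero_pad w).
Proof.
move=> ok i j ij /and3P[i0 isz wi] /and3P[j0 jsz wj] zeros.
have [_ gaps] := gap_ok_gaps ok.
rewrite (_ : absz (j - i - 1)%R = (absz j - absz i - 1)%N); last by lia.
apply: gaps => //; first lia.
move=> c /andP[c1 c2]; move: (zeros (Posz c)).
have c0 : (0 <= c%:Z)%R by [].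
have csz : (c%:Z < (size w)%:Z)%R by lia.
rewrite /zero_pad c0 csz; apply; lia.
Qed.

Lemma in_gap_lang w : in_lang (gap_shift [set u | S u]) w <-> gap_ok None w.
Proof.
split=> [[x [hx [i hi]]]|ok]; first exact: gap_ok_window hx w i None hi I.
exists (zero_pad w); split; first exact: zero_pad_in_gap_shift.
exists 0%R => k hk.
have ksz : (k%:Z < (size w)%:Z)%R by lia.
by rewrite /zero_pad add0r ksz.
Qed.

End GapAutomaton.

Fixpoint words n : seq (seq bool) :=
  if n is m.+1 then [seq true :: s | s <- words m] ++ [seq false :: s | s <- words m]
  else [:: [::]].

Lemma cons_inj (T : Type) (x : T) : injective (cons x).
Proof. by move=> s s' []. Qed.

Lemma mem_words n s : (s \in words n) = (size s == n).
Proof.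
elim: n s => [|n IH] [|b s] //=; rewrite mem_cat.
  by apply/negP => /orP[] /mapP[].
rewrite eqSS -IH; case: b; rewrite (mem_map (@cons_inj _ _)).
  by case: mapP => [[t _ []]|]; rewrite ?orbF.
by case: mapP => [[t _ []]|].
Qed.

Lemma uniq_words n : uniq (words n).
Proof.
elim: n => //= n IH; rewrite cat_uniq !map_inj_uniq ?IH //= ?andbT; try exact: cons_inj.
by apply/hasPn => _ /mapP[s _ ->]; apply/mapP => [[]].
Qed.

Lemma card_tuples_count n (P : pred (seq bool)) :
  #|[set w : n.-tuple bool | P w]%SET| = count P (words n).
Proof.
rewrite cardsE cardE size_filter -enumT.
have /permP <- : perm_eq (map val (enum {: n.-tuple bool})) (words n).
  apply: uniq_perm (uniq_words n) _; first by rewrite (map_inj_uniq val_inj) enum_uniq.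
  move=> s; rewrite mem_words; apply/mapP/eqP => [[t _ ->]|hs]; first exact: size_tuple.
  by exists (Tuple (introT eqP hs)); rewrite ?mem_enum.
by rewrite [RHS]count_map enumT; apply: eq_count => w; rewrite /= unfold_in.
Qed.

Lemma count_wordsS n (P : pred (seq bool)) :
  count P (words n.+1) = count (P \o cons true) (words n) + count (P \o cons false) (words n).
Proof. by rewrite /= count_cat !count_map. Qed.

Section Counting.
Variable S : pred nat.

Definition tail_count t n := count (gap_ok S (Some t)) (words n).
Definition lang_count n := count (gap_ok S None) (words n).

Lemma card_blocks n : #|blocks (gap_shift [set u | S u]) n| = lang_count n.
Proof.
rewrite /blocks (card_tuples_count n (fun w => `[< in_lang (gap_shift [set u | S u]) w >])).
by apply: eq_count => w; apply/asboolP/idP => /in_gap_lang.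
Qed.

Lemma lang_countS n : lang_count n.+1 = tail_count 0 n + lang_count n.
Proof. by rewrite /lang_count count_wordsS. Qed.

Lemma tail_countS t n : tail_count t n.+1 = (if S t then tail_count 0 n else 0) + tail_count t.+1 n.
Proof.
rewrite /tail_count count_wordsS (@eq_count _ _ (fun w => S t && gap_ok S (Some 0) w)) //.
by case: (S t); rewrite ?count_pred0.
Qed.

(* A word read after [t] zeros is either all zeros, or has its first one at some position [u]
   with [t + u] in [S]. *)
Lemma tail_count_renewal t n :
  tail_count t n = 1 + \sum_(u < n | S (t + u)) tail_count 0 (n - u.+1).
Proof.
elim: n t => [|n IH] t; first by rewrite big_ord0.
rewrite tail_countS (IH t.+1) [in RHS]big_mkcond big_ord_recl /= addn0 subSS subn0.
rewrite addnCA; congr (_ + (_ + _)); rewrite big_mkcond.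
by apply: eq_bigr => u _; rewrite /bump add1n addSn addnS subSS.
Qed.

Lemma lang_count_gt0 n : 0 < lang_count n.
Proof. by elim: n => // n IH; rewrite lang_countS ltn_addl. Qed.

End Counting.

Definition syndetic (S : pred nat) := exists K, forall a, exists2 p, p < K & S (a + p).

Definition gap_word (ss : seq nat) := flatten [seq rcons (nseq s false) true | s <- ss].

Lemma size_gap_word ss : size (gap_word ss) = sumn [seq s.+1 | s <- ss].
Proof. by elim: ss => //= s ss IH; rewrite size_cat IH size_rcons size_nseq. Qed.

Lemma gap_word_ok (S : pred nat) ss : all S ss ->
  gap_ok S (Some 0) (gap_word ss) /\ gap_state (Some 0) (gap_word ss) = Some 0.
Proof.
elim: ss => //= s ss IH /andP[Ss /IH[ok st]].
rewrite gap_ok_cat gap_state_cat -cats1 gap_ok_cat gap_state_cat gap_state_nseq.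
by rewrite gap_ok_nseq /= addn0 Ss ok st.
Qed.

Lemma nseq_false_or_first_one (v : seq bool) :
  v = nseq (size v) false \/ exists b v', v = nseq b false ++ true :: v'.
Proof.
elim: v => [|[] v IH]; [by left|by right; exists 0, v|].
by case: IH => [{1}->|[b [v' ->]]]; [left|right; exists b.+1, v'].
Qed.

Lemma sum_consecutive_multiples t M : 0 < t -> t * t <= M -> exists a b, M = a * t + b * t.+1.
Proof.
move=> t0 tM; exists (M %/ t - M %% t), (M %% t).
have := divn_eq M t; have : t <= M %/ t by rewrite leq_divRL.
have : M %% t < t by rewrite ltn_mod.
nia.
Qed.

Section Specification.
Variables (S : pred nat) (j : nat).
Hypotheses (S_j : S j) (S_j1 : S j.+1) (S_syndetic : syndetic S).

(* The bridge is [0^p1 1 F 0^p2], where [p1, p2 < K] complete the gaps at both ends to elements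
   of [S] and [F] is a concatenation of blocks [0^j 1] and [0^(j+1) 1] of the remaining length. *)
Lemma gap_bridge : exists2 N, 0 < N &
  forall a b, exists2 w, size w = N & gap_ok S (Some a) (w ++ nseq b false ++ [:: true]).
Proof.
have [K gaps] := S_syndetic; exists (K + K + j.+2 * j.+2) => [|a b]; first lia.
have [[p1 p1K S1] [p2 p2K S2]] := (gaps a, gaps b).
have [al [be hM]] : exists al be, K + K + j.+2 * j.+2 - 1 - p1 - p2 = al * j.+1 + be * j.+2.
  by apply: sum_consecutive_multiples; lia.
set ss := nseq al j ++ nseq be j.+1.
have [okF stF] : gap_ok S (Some 0) (gap_word ss) /\ gap_state (Some 0) (gap_word ss) = Some 0.
  by apply: gap_word_ok; rewrite all_cat !all_nseq S_j S_j1 !orbT.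
exists (nseq p1 false ++ true :: gap_word ss ++ nseq p2 false).
  rewrite size_cat /= size_cat !size_nseq size_gap_word map_cat sumn_cat.
  have sumnS m x : sumn (map succn (nseq m x)) = m * x.+1 by elim: m => //= m ->.
  by rewrite !sumnS; lia.
rewrite -!catA cat_cons gap_ok_cat gap_ok_nseq gap_state_nseq /= addnC S1 /=.
by rewrite !gap_ok_cat okF !gap_state_cat stF !gap_state_nseq !gap_ok_nseq /= addn0 S2.
Qed.

Lemma gap_shift_specification : specification (gap_shift [set u | S u]).
Proof.
have [N N0 bridge] := gap_bridge; exists N; split=> // u v /in_gap_lang hu /in_gap_lang hv.
have zeros : gap_state None u = None \/ v = nseq (size v) false ->
    exists w, size w = N /\ in_lang (gap_shift [set u | S u]) w /\
              in_lang (gap_shift [set u | S u]) (u ++ w ++ v).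
  move=> uv; exists (nseq N false); rewrite size_nseq !in_gap_lang gap_ok_nseq.
  rewrite !gap_ok_cat hu gap_ok_nseq /=.
  by case: uv => [->|->]; rewrite ?gap_state_nseq_None ?gap_ok_nseq.
case ua: (gap_state None u) => [a|]; last by apply: zeros; left.
have [vz|[b [v' vE]]] := nseq_false_or_first_one v; first by apply: zeros; right.
have [w sw ok] := bridge a b; exists w; rewrite !in_gap_lang; split=> //; split.
  by move: ok; rewrite gap_ok_cat => /andP[/gap_ok_None].
have hv' : gap_ok S (Some 0) v'.
  by move: hv; rewrite vE gap_ok_cat gap_state_nseq_None /= => /andP[].
rewrite vE (_ : u ++ w ++ _ = u ++ (w ++ nseq b false ++ [:: true]) ++ v'); last by rewrite -!catA.
by rewrite gap_ok_cat hu ua gap_ok_cat ok !gap_state_cat.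
Qed.
End Specification.

Local Open Scope ring_scope.

Definition weight_sum {R : numDomainType} (S : pred nat) (y : R) n :=
  \sum_(u < n | S u) y ^+ u.+1.

Lemma weight_sum_nondecreasing (R : numDomainType) (S : pred nat) (y : R) :
  0 <= y -> nondecreasing_seq (weight_sum S y).
Proof.
move=> y0; apply/nondecreasing_seqP => n.
rewrite /weight_sum [leRHS]big_mkcond big_ord_recr -big_mkcond /= lerDl.
by case: (S n) => //; apply: exprn_ge0.
Qed.

Section Renewal.
Variables (R : realType) (S : pred nat).
Local Notation K n := (tail_count S 0 n)%:R.
Local Notation H n := (lang_count S n)%:R.

Lemma tail_count_weighted (y : R) n : K n * y ^+ n =
  y ^+ n + \sum_(u < n | S u) K (n - u.+1)%N * y ^+ (n - u.+1) * y ^+ u.+1.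
Proof.
rewrite tail_count_renewal natrD natr_sum mulrDl mul1r mulr_suml; congr (_ + _).
by apply: eq_bigr => u _; rewrite -mulrA -exprD subnK.
Qed.

Lemma tail_count_ge1 n : 1 <= K n :> R.
Proof. by rewrite ler1n tail_count_renewal. Qed.

Lemma tail_count_upper (y th : R) : 0 <= y <= 1 -> th < 1 ->
  (forall n, weight_sum S y n <= th) ->
  forall n, K n * y ^+ n <= (1 - th)^-1.
Proof.
move=> /andP[y0 y1] th1 hsum.
have th0 : 0 <= th by have := hsum 0; rewrite /weight_sum big_ord0.
have inv0 : 0 <= (1 - th)^-1 by rewrite invr_ge0 subr_ge0 ltW.
elim/ltn_ind=> n IH; rewrite tail_count_weighted.
apply: (@le_trans _ _ (1 + (1 - th)^-1 * th)); last first.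
  by rewrite le_eqVlt; apply/orP; left; apply/eqP; field; rewrite subr_eq0 eq_sym lt_eqF.
apply: lerD; first exact: exprn_ile1.
apply: le_trans (ler_wpM2l inv0 (hsum n)); rewrite mulr_sumr; apply: ler_sum => u _.
apply: ler_wpM2r; first exact: exprn_ge0.
by apply: IH; have := ltn_ord u; lia.
Qed.

Lemma tail_count_lower (y : R) n0 : 0 <= y <= 1 -> 1 <= weight_sum S y n0 ->
  forall n, y ^+ n0 <= K n * y ^+ n.
Proof.
move=> /andP[y0 y1] hsum; elim/ltn_ind=> n IH.
have [lt_n_n0|le_n0_n] := ltnP n n0.
  apply: (@le_trans _ _ (y ^+ n)); first exact: ler_wiXn2l (ltnW lt_n_n0).
  by rewrite ler_peMl ?exprn_ge0 ?tail_count_ge1.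
rewrite tail_count_weighted.
apply: (@le_trans _ _ (y ^+ n0 * \sum_(u < n | S u) y ^+ u.+1)).
  rewrite ler_peMr ?exprn_ge0 //; apply: le_trans hsum _.
  exact: weight_sum_nondecreasing.
rewrite mulr_sumr; apply: ler_wpDl; first exact: exprn_ge0.
apply: ler_sum => u _.
apply: ler_wpM2r; first exact: exprn_ge0.
by apply: IH; have := ltn_ord u; lia.
Qed.

Lemma lang_count_upper (y C : R) : 0 <= y < 1 -> (forall n, K n * y ^+ n <= C) ->
  exists D, forall n, H n * y ^+ n <= D.
Proof.
move=> /andP[y0 y1] hC; have C0 : 0 <= C by apply: le_trans (hC 0%N); rewrite mulr1 ler01.
exists (1 + C / (1 - y)); elim=> [|n IH].
  by rewrite expr0 mulr1 lerDl divr_ge0 // subr_ge0 ltW.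
have -> : H n.+1 * y ^+ n.+1 = (K n * y ^+ n + H n * y ^+ n) * y.
  by rewrite lang_countS natrD exprSr; ring.
have hD : (1 + C / (1 - y)) * (1 - y) = 1 - y + C.
  by field; rewrite subr_eq0 eq_sym lt_eqF.
have := hC n; move: IH hD; set D := 1 + C / (1 - y); nra.
Qed.

Lemma lang_count_lower (y c : R) : 0 <= y <= 1 -> c <= 1 -> (forall n, c <= K n * y ^+ n) ->
  forall n, c * y <= H n * y ^+ n.
Proof.
move=> /andP[y0 y1] c1 hc [|n]; first by rewrite /lang_count /= expr0 mulr1; nra.
rewrite lang_countS natrD exprSr mulrA ler_wpM2r // mulrDl ler_wpDr //.
by rewrite mulr_ge0 ?exprn_ge0.
Qed.
End Renewal.

Lemma weight_sum_scale_le {R : realFieldType} (S : pred nat) (r y : R) n :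
  0 < r -> 0 <= y <= r -> weight_sum S y n <= y / r * weight_sum S r n.
Proof.
move=> r0 /andP[y0 yr]; rewrite /weight_sum mulr_sumr; apply: ler_sum => u _.
set th := y / r; have th0 : 0 <= th by rewrite /th divr_ge0 // ltW.
have th1 : th <= 1 by rewrite /th ler_pdivrMr // mul1r.
have yE : y = th * r by rewrite /th divfK ?gt_eqF.
rewrite {1}yE exprMn ler_pM2r ?exprn_gt0 //.
by rewrite exprS ler_piMr ?exprn_ile1.
Qed.

Lemma weight_sum_scale_ge {R : realFieldType} (S : pred nat) (r y : R) n :
  0 < r <= y -> y / r * weight_sum S r n <= weight_sum S y n.
Proof.
move=> /andP[r0 ry]; rewrite /weight_sum mulr_sumr; apply: ler_sum => u _.
set th := y / r; have th1 : 1 <= th by rewrite /th ler_pdivlMr // mul1r.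
have yE : y = th * r by rewrite /th divfK ?gt_eqF.
rewrite [in leRHS]yE exprMn ler_pM2r ?exprn_gt0 //.
by rewrite exprS ler_peMr ?exprn_ege1 // (le_trans ler01).
Qed.

Lemma cvg_growth_rate (R : realType) (a : nat -> R) (q : R) : 0 < q ->
  (forall d, 0 < d < q -> exists A, forall n, a n <= A + n%:R * (q + d)) ->
  (forall d, 0 < d < q -> exists B, forall n, n%:R * (q - d) - B <= a n) ->
  (fun n => a n / n%:R) @ \oo --> q.
Proof.
move=> q0 upper lower; apply/cvgrPdist_lt => e e0.
pose d := Num.min e q / 2.
have [mine minq] : Num.min e q <= e /\ Num.min e q <= q by rewrite !ge_min !lexx /= ?orbT.
have d0 : 0 < d by rewrite divr_gt0 // lt_min e0.
have dq : 0 < d < q by rewrite d0 /d; lra.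
have [[A hA] [B hB]] := (upper d dq, lower d dq).
near=> n.
have nd : `|A| + `|B| < n%:R * d.
  by rewrite -ltr_pdivrMr //; near: n; apply: nbhs_infty_gtr.
have n0 : 0 < n%:R :> R.
  by rewrite -(pmulr_lgt0 _ d0); apply: le_lt_trans nd; rewrite addr_ge0.
have nde : n%:R * (d + d) <= n%:R * e by rewrite ler_pM2l // /d; lra.
have [A1 B1] := (ler_norm A, ler_norm B); have [A0 B0] := (normr_ge0 A, normr_ge0 B).
have := hA n; have := hB n; rewrite -[a n](divfK (lt0r_neq0 n0)).
move: (a n / n%:R) => t lo up; rewrite mulfK ?lt0r_neq0 // ltr_distlC.
apply/andP; split; nra.
Unshelve. all: by end_near.
Qed.

Section Log2Bounds.
Variables (R : realType) (c : R).
Let y := expR (- (c * ln 2)) : R.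

Lemma ln_weighted (x : R) n : 0 < x -> ln (x * y ^+ n) = ln x - n%:R * c * ln 2.
Proof.
move=> x0; rewrite lnM ?posrE ?exprn_gt0 ?expR_gt0 // lnXn ?expR_gt0 // expRK.
by rewrite mulNrn -mulrA mulr_natl.
Qed.

Lemma log2_le_of_weighted (x D : R) n : 0 < x -> x * y ^+ n <= D ->
  ln x / ln 2 <= ln D / ln 2 + n%:R * c.
Proof.
move=> x0 hD; have ln2 : 0 < ln (2 : R) by rewrite ln_gt0 // ltr1n.
have xy0 : 0 < x * y ^+ n by rewrite mulr_gt0 ?exprn_gt0 ?expR_gt0.
have := hD; rewrite -ler_ln ?posrE ?(lt_le_trans xy0) // ln_weighted // => h.
by rewrite ler_pdivrMr // mulrDl divfK ?gt_eqF //; lra.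
Qed.

Lemma log2_ge_of_weighted (x : R) m n : 0 < x -> y ^+ m <= x * y ^+ n ->
  n%:R * c - m%:R * c <= ln x / ln 2.
Proof.
move=> x0 hm; have ln2 : 0 < ln (2 : R) by rewrite ln_gt0 // ltr1n.
have := hm; rewrite -ler_ln ?posrE ?mulr_gt0 ?exprn_gt0 ?expR_gt0 //.
rewrite ln_weighted // lnXn ?expR_gt0 // expRK => h.
by rewrite ler_pdivlMr //; lra.
Qed.
End Log2Bounds.

Section Entropy.
Variables (R : realType) (S : pred nat) (r : R).
Hypotheses (r_gt0 : 0 < r) (r_lt1 : r < 1) (weight_sum_cvg : weight_sum S r @ \oo --> (1 : R)).

Lemma weight_sum_le1 n : weight_sum S r n <= 1.
Proof.
rewrite -(cvg_lim _ weight_sum_cvg) //.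
apply: nondecreasing_cvgn_le; last exact: cvgP weight_sum_cvg.
exact/weight_sum_nondecreasing/ltW.
Qed.

Lemma weight_sum_exceeds x : x < 1 -> exists n, x <= weight_sum S r n.
Proof.
rewrite -subr_gt0 => x1; have /cvgrPdist_lt/(_ _ x1)[N _ hN] := weight_sum_cvg.
by exists N; have := hN N (leqnn N); rewrite ltr_distlC opprB addrCA subrr addr0 => /andP[/ltW].
Qed.

Let ln2_gt0 : 0 < ln (2 : R). Proof. by rewrite ln_gt0 // ltr1n. Qed.
Let lang_count_gt0R n : 0 < (lang_count S n)%:R :> R.
Proof. by rewrite ltr0n lang_count_gt0. Qed.

Lemma log2_lang_count_le c : expR (- (c * ln 2)) < r ->
  exists A, forall n, ln (lang_count S n)%:R / ln 2 <= A + n%:R * c.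
Proof.
set y := expR _ => yr; have y0 : 0 < y := expR_gt0 _.
have y1 : 0 <= y < 1 by rewrite ltW //= (lt_trans yr).
have th1 : y / r < 1 by rewrite ltr_pdivrMr // mul1r.
have y_sum n : weight_sum S y n <= y / r.
  apply: le_trans (weight_sum_scale_le S n r_gt0 _) _; first by rewrite !ltW.
  by rewrite ler_piMr ?weight_sum_le1 // divr_ge0 ?ltW.
have [|D hD] := lang_count_upper y1 (tail_count_upper _ th1 y_sum).
  by rewrite ltW //= ltW // (lt_trans yr).
by exists (ln D / ln 2) => n; apply: log2_le_of_weighted (lang_count_gt0R n) (hD n).
Qed.

Lemma log2_lang_count_ge c : 0 <= c -> r < expR (- (c * ln 2)) ->
  exists B, forall n, n%:R * c - B <= ln (lang_count S n)%:R / ln 2.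
Proof.
set y := expR _ => c0 ry; have y0 : 0 < y := lt_trans r_gt0 ry.
have y01 : 0 <= y <= 1 by rewrite ltW //= -expR0 ler_expR oppr_le0 mulr_ge0 // ltW.
have [n0 hn0] : exists n, r / y <= weight_sum S r n.
  by apply: weight_sum_exceeds; rewrite ltr_pdivrMr ?mul1r.
have y_sum : 1 <= weight_sum S y n0.
  have ry' : 0 < r <= y by rewrite r_gt0 ltW.
  apply: le_trans (weight_sum_scale_ge S n0 ry').
  apply: le_trans (ler_wpM2l _ hn0); last by rewrite divr_ge0 ?ltW.
  by rewrite mulrA divfK ?gt_eqF // divff // gt_eqF.
have low := lang_count_lower y01 (exprn_ile1 n0 (ltW y0) (elimT andP y01).2)
  (tail_count_lower y01 y_sum).
exists (n0.+1%:R * c) => n.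
by apply: log2_ge_of_weighted (lang_count_gt0R n) _; rewrite exprSr low.
Qed.

Theorem gap_shift_entropy : has_entropy (gap_shift [set u | S u]) (- ln r / ln 2).
Proof.
have ln2 := ln2_gt0; set h := - ln r / ln 2.
have h0 : 0 < h by rewrite divr_gt0 // oppr_gt0 ln_lt0 // r_gt0.
have rE : r = expR (- (h * ln 2)) by rewrite divfK ?gt_eqF // opprK lnK ?posrE.
rewrite /has_entropy; under eq_fun do rewrite card_blocks.
apply: cvg_growth_rate h0 _ _ => d /andP[d0 dh].
  by apply: log2_lang_count_le; rewrite rE ltr_expR; nra.
by apply: log2_lang_count_ge; rewrite ?rE ?ltr_expR; nra.
Qed.
End Entropy.

Lemma exists_expr_lt (R : realType) (x e : R) : 0 <= x -> x < 1 -> 0 < e -> exists m, x ^+ m < e.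
Proof.
move=> x0 x1 e0; have /cvg_expr : `|x| < 1 by rewrite ger0_norm.
move=> /cvgrPdist_lt/(_ e e0)[N _ hN]; exists N; have := hN N (leqnn N).
by rewrite sub0r normrN ger0_norm ?exprn_ge0.
Qed.

Section LazyExpansion.
Variables (R : realType) (r : R) (j : nat).
Hypotheses (r_gt_half : 1 < 2 * r) (r_lt1 : r < 1).
Hypotheses (start_lo : 1 - r <= r ^+ j.+1) (start_hi : r ^+ j.+1 + r ^+ j.+2 < 1).

Let r_gt0 : 0 < r. Proof. move: r_gt_half; lra. Qed.
Let r1_neq0 : 1 - r != 0. Proof. by rewrite subr_eq0 eq_sym lt_eqF. Qed.

(* [lazy_rem m] is the part of 1 not yet covered by the weights of the elements below [j.+2 + m],
   in units of the tail sum of [r ^+ u.+1] over [u >= j.+2 + m]. The element [j.+2 + m] is taken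
   only when the later terms alone could not cover this remainder. *)
Fixpoint lazy_rem (m : nat) : R :=
  if m is m'.+1 then
    if lazy_rem m' <= r then lazy_rem m' / r else (lazy_rem m' - (1 - r)) / r
  else (1 - r ^+ j.+1 - r ^+ j.+2) * (1 - r) / r ^+ j.+3.

Definition lazy_set (u : nat) : bool :=
  [|| u == j, u == j.+1 | (j.+2 <= u)%N && (r < lazy_rem (u - j.+2))].

Lemma lazy_set_shift m : lazy_set (j.+2 + m) = (r < lazy_rem m).
Proof.
rewrite /lazy_set leq_addr addKn /=.
by have [-> ->] : (j.+2 + m == j) = false /\ (j.+2 + m == j.+1) = false by split; apply/eqP; lia.
Qed.

Lemma lazy_set_lt u : (u < j)%N -> lazy_set u = false.
Proof.
move=> uj; rewrite /lazy_set.
by have [-> -> ->] : [/\ u == j = false, u == j.+1 = false & (j.+2 <= u)%N = false] by split; lia.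
Qed.

Lemma lazy_rem0_bounds : 0 < lazy_rem 0 <= 1.
Proof.
have := start_lo; have := start_hi; have := r_gt_half; have := r_lt1.
rewrite /= (exprSr r j.+2) (exprSr r j.+1); set x := r ^+ j.+1 => r1 r2 hi lo.
have x0 : 0 < x by rewrite exprn_gt0.
have xr0 : 0 < x * r * r by rewrite !mulr_gt0.
rewrite divr_gt0 ?mulr_gt0 ?subr_gt0 //=; last lra.
by rewrite ler_pdivrMr // mul1r; nra.
Qed.

Definition lazy_rem_floor := lazy_rem 0 * ((2 * r - 1) / r).

Lemma lazy_rem_floor_gt0 : 0 < lazy_rem_floor.
Proof.
have [rem0 _] := andP lazy_rem0_bounds.
by rewrite mulr_gt0 // divr_gt0 // subr_gt0.
Qed.

Lemma lazy_rem_bounds m : lazy_rem_floor <= lazy_rem m <= 1.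
Proof.
have [rem0 rem1] := andP lazy_rem0_bounds; have := r_gt_half; have := r_lt1 => r1 r2.
have q0 : 0 <= (2 * r - 1) / r by rewrite divr_ge0 ?ltW // subr_gt0.
have q1 : (2 * r - 1) / r <= 1 by rewrite ler_pdivrMr // mul1r; lra.
elim: m => [|m /andP[IH1 IH2]] /=; first by rewrite rem1 andbT ler_piMr // ltW.
have rem_gt0 : 0 < lazy_rem m by apply: lt_le_trans lazy_rem_floor_gt0 IH1.
case: ifPn => [rm|]; last rewrite -ltNge => rm.
  rewrite ler_pdivrMr // mul1r rm andbT ler_pdivlMr //.
  by apply: le_trans IH1; rewrite ler_piMr ?ltW ?lazy_rem_floor_gt0.
rewrite ler_pdivrMr // mul1r andbC; apply/andP; split; first lra.
apply: (@le_trans _ _ ((2 * r - 1) / r)); first by rewrite /lazy_rem_floor ler_piMl.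
by rewrite ler_pM2r ?invr_gt0 //; lra.
Qed.

Lemma weight_sum_lazy m :
  weight_sum lazy_set r (j.+2 + m) = 1 - lazy_rem m * r ^+ (j.+2 + m).+1 / (1 - r).
Proof.
elim: m => [|m IH].
  rewrite addn0 /weight_sum big_mkcond !big_ord_recr /= big1 => [|u _]; last first.
    by rewrite lazy_set_lt.
  rewrite /lazy_set !eqxx orbT /= add0r; field.
  by rewrite r1_neq0 expf_neq0 // gt_eqF.
rewrite addnS /weight_sum big_mkcond big_ord_recr -big_mkcond /= -/(weight_sum _ _ _) IH.
rewrite lazy_set_shift /=; case: ifPn => [rm|]; last rewrite -leNgt => rm.
  rewrite leNgt rm /= !exprS; field.
  by rewrite r1_neq0 gt_eqF.
rewrite rm addr0 !exprS; field.
by rewrite r1_neq0 gt_eqF.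
Qed.

Lemma lazy_rem_skip m p : (forall i, (i < p)%N -> lazy_rem (m + i) <= r) ->
  lazy_rem (m + p) * r ^+ p = lazy_rem m.
Proof.
elim: p => [|p IH] low; first by rewrite addn0 mulr1.
rewrite addnS /= low // exprS mulrA divfK ?gt_eqF // IH // => i ip.
by apply: low; rewrite ltnS ltnW.
Qed.

Lemma lazy_set_syndetic : syndetic lazy_set.
Proof.
have [L rL] := exists_expr_lt (ltW r_gt0) r_lt1 lazy_rem_floor_gt0.
have taken m : exists2 p, (p <= L)%N & r < lazy_rem (m + p).
  have [//|none] := pselect (exists2 p, (p <= L)%N & r < lazy_rem (m + p)).
  have low i : (i < L)%N -> lazy_rem (m + i) <= r.
    by move=> iL; rewrite leNgt; apply/negP => rm; apply: none; exists i => //; apply: ltnW.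
  have [floor_le _] := andP (lazy_rem_bounds m); have [_ le1] := andP (lazy_rem_bounds (m + L)).
  have : lazy_rem m <= r ^+ L by rewrite -(lazy_rem_skip low) ler_piMl ?exprn_ge0 ?(ltW r_gt0).
  by move/(le_trans floor_le)/(lt_le_trans rL); rewrite ltxx.
exists (j.+2 + L).+1 => a; have [aj|ja] := leqP a j.+2.
  have [p pL rp] := taken 0%N; exists (j.+2 - a + p)%N; first lia.
  by rewrite (_ : (a + _ = j.+2 + (0 + p))%N) ?lazy_set_shift //; lia.
have [p pL rp] := taken (a - j.+2)%N; exists p; first lia.
by rewrite (_ : (a + p = j.+2 + (a - j.+2 + p))%N) ?lazy_set_shift //; lia.
Qed.

Lemma weight_sum_lazy_le1 n : weight_sum lazy_set r n <= 1.
Proof.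
apply: le_trans (weight_sum_nondecreasing lazy_set (ltW r_gt0) (leq_addl j.+2 n)) _.
have [floor_le le1] := andP (lazy_rem_bounds n).
rewrite weight_sum_lazy lerBlDr lerDl divr_ge0 ?subr_ge0 ?(ltW r_lt1) //.
by rewrite mulr_ge0 ?exprn_ge0 ?(ltW r_gt0) // (le_trans (ltW lazy_rem_floor_gt0)).
Qed.

Lemma weight_sum_lazy_cvg : weight_sum lazy_set r @ \oo --> (1 : R).
Proof.
apply/cvgrPdist_lt => e e0.
have [m rm] : exists m, r ^+ m < e * (1 - r).
  by apply: (exists_expr_lt (ltW r_gt0) r_lt1); rewrite mulr_gt0 ?subr_gt0.
have near1 : 1 - e < weight_sum lazy_set r (j.+2 + m).
  have [floor_le le1] := andP (lazy_rem_bounds m).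
  rewrite weight_sum_lazy ltrD2l ltrN2 ltr_pdivrMr ?subr_gt0 //.
  apply: le_lt_trans rm; apply: le_trans (_ : r ^+ (j.+2 + m).+1 <= _).
    by rewrite ler_piMl ?exprn_ge0 ?(ltW r_gt0).
  by apply: ler_wiXn2l; rewrite ?(ltW r_gt0) ?(ltW r_lt1) //; lia.
near=> n.
rewrite ger0_norm ?subr_ge0 ?weight_sum_lazy_le1 // ltrBlDr -ltrBlDl.
apply: lt_le_trans near1 (weight_sum_nondecreasing lazy_set (ltW r_gt0) _).
by near: n; apply: nbhs_infty_ge.
Unshelve. all: by end_near.
Qed.
End LazyExpansion.

Lemma exists_lazy_start (R : realType) (r : R) : 1 < 2 * r -> r < 1 ->
  exists j, 1 - r <= r ^+ j.+1 /\ r ^+ j.+1 + r ^+ j.+2 < 1.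
Proof.
move=> r2 r1; have r0 : 0 < r by lra.
have ex : exists n, r ^+ n.+1 < 1 - r.
  have [n rn] : exists n, r ^+ n < 1 - r.
    by apply: (exists_expr_lt (ltW r0) r1); rewrite subr_gt0.
  by exists n; apply: le_lt_trans rn; rewrite exprS ler_piMl ?exprn_ge0 // ltW.
case: (ex_minnP ex) => [[|j] rj jmin]; first by move: rj; rewrite expr1; lra.
exists j; split; first by rewrite leNgt; apply/negP => /jmin; rewrite ltnn.
have : r ^+ j.+1 <= r by rewrite exprS ler_piMr ?exprn_ile1 ?ltW.
by move: rj; lra.
Qed.

Lemma lazy_gap_set (R : realType) (r : R) : 1 < 2 * r -> r < 1 ->
  exists (S : pred nat) j, [/\ S j, S j.+1, syndetic S & weight_sum S r @ \oo --> (1 : R)].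
Proof.
move=> r2 r1; have [j [lo hi]] := exists_lazy_start r2 r1.
exists (lazy_set r j), j; split.
- by rewrite /lazy_set eqxx.
- by rewrite /lazy_set eqxx orbT.
- exact: lazy_set_syndetic.
- exact: weight_sum_lazy_cvg.
Qed.

Theorem proposition4p2 (R : realType) (q : R) :
  0 < q < 1 ->
  exists S : set nat, S !=set0 /\
    specification (gap_shift S) /\ has_entropy (gap_shift S) q.
Proof.
move=> /andP[q0 q1]; have ln2 : 0 < ln (2 : R) by rewrite ln_gt0 // ltr1n.
pose r := expR (- (q * ln 2)) : R.
have r2 : 1 < 2 * r.
  have half : expR (- ln 2) = 2^-1 :> R by rewrite expRN lnK ?posrE.
  by rewrite -ltr_pdivrMl // mulr1 -half ltr_expR; nra.
have r1 : r < 1 by rewrite -expR0 ltr_expR; nra.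
have [S [j [Sj Sj1 S_syndetic S_cvg]]] := lazy_gap_set r2 r1.
exists [set u | S u]; split; first by exists j.
split; first exact: gap_shift_specification Sj Sj1 S_syndetic.
have := gap_shift_entropy (expR_gt0 _) r1 S_cvg.
by rewrite expRK opprK mulfK // gt_eqF.
Qed.
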